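(* Let $\mathfrak{S}$ be a labelled sequent. Any saturation phase started on $\mathfrak{S}$ terminates and yields a finite derivation (with root $\mathfrak{S}$) whose open leaves are saturated.
   Context: Formulas: fix a countable set $\mathtt{Prop}$ of propositional atoms; formulas are generated by $A ::= \bot \mid p \mid A \to A \mid \Box A \mid \triangle A$ with $p \in \mathtt{Prop}$. Labelled sequents: fix a countable set $\mathtt{Lab}$ of labels. A labelled formula is $x:A$ with $x\in\mathtt{Lab}$ and $A$ a formula; a relational atom is $xRy$ or $xSy$ with $x,y \in \mathtt{Lab}$. A sequent $\mathcal{R},\Gamma\Rightarrow\Omega$ consists of a finite multiset $\mathcal{R}$ of relational atoms and finite multisets $\Gamma,\Omega$ of labelled formulas; commas denote multiset union. Rules used (premisses above, conclusion below; $\mathcal{R},\Gamma,\Omega$ arbitrary): ($\to$R) from $\mathcal{R},\Gamma,x:A\Rightarrow x:B,\Omega$ infer $\mathcal{R},\Gamma\Rightarrow x:A\to B,\Omega$; ($\to$L) from $\mathcal{R},\Gamma\Rightarrow x:A,\Omega$ and $\mathcal{R},\Gamma,x:B\Rightarrow\Omega$ infer $\mathcal{R},\Gamma,x:A\to B\Rightarrow\Omega$; ($\Box$L) from $\mathcal{R},xRy,x:\Box A,y:A,\Gamma\Rightarrow\Omega$ infer $\mathcal{R},xRy,x:\Box A,\Gamma\Rightarrow\Omega$; ($\triangle$L) from $\mathcal{R},xSy,x:\triangle A,y:A,\Gamma\Rightarrow\Omega$ infer $\mathcal{R},xSy,x:\triangle A,\Gamma\Rightarrow\Omega$; ($\mathrm{trans}_{\circ\bullet}$,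 for each $\circ,\bullet\in\{R,S\}$) from $\mathcal{R},x\circ y,y\bullet z,x\bullet z,\Gamma\Rightarrow\Omega$ infer $\mathcal{R},x\circ y,y\bullet z,\Gamma\Rightarrow\Omega$. A derivation is a (finite or infinite) tree of sequents built from rule instances, possibly with open leaves (leaves that are not conclusions of premiss-free rules). Saturation: in a sequent $\mathcal{R},\Gamma\Rightarrow\Omega$ containing $x:A$, the labelled formula $x:A$ is saturated if: $A\in\mathtt{Prop}$ or $A=\bot$; or $A=A_1\to A_2$ and [if $x:A\in\Gamma$ then $x:A_1\in\Omega$ or $x:A_2\in\Gamma$] and [if $x:A\in\Omega$ then $x:A_1\in\Gamma$ and $x:A_2\in\Omega$]; or $A=\Box A_1$ and if $x:A\in\Gamma$ then $y:A_1\in\Gamma$ for all $y$ with $xRy\in\mathcal{R}$; or $A=\triangle A_1$ and if $x:A\in\Gamma$ then $y:A_1\in\Gamma$ for all $y$ with $xSy\in\mathcal{R}$. A sequent is saturated if all its labelled formulas are saturated and $\mathcal{R}$ is closed under the transitivity rules (whenever $x\circ y,y\bullet z\in\mathcal{R}$ with $\circ,\bullet\in\{R,S\}$, also $x\bullet z\in\mathcal{R}$). Saturation phase: starting from a sequent (or from the open leaves of a derivation), repeatedly apply, bottom-up, the rules $\to$L, $\to$R, $\Box$L, $\triangle$L and $\mathrm{trans}_{\circ\bullet}$ to open leaves that are not saturated, in any order, each application addressing a formula or pair of relational atoms that is not yet saturated in that leaf, for as long as possible. *)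

From Stdlib Require Import List Permutation Relations.
Import ListNotations.

Definition prop_atom := nat.
Definition label := nat.

Inductive form : Type :=
| Bot : form
| Var : prop_atom -> form
| Imp : form -> form -> form
| Box : form -> form
| Tri : form -> form.

Definition lform : Type := (label * form)%type.

Inductive rkind : Type := kR | kS.

Inductive ratom : Type := Rel : rkind -> label -> label -> ratom.

(* A sequent  R, Gamma => Omega; the three lists are read as finite
   multisets (lists up to permutation, see seq_equiv). *)
Record sequent : Type := mkSeq {
  rels : list ratom;
  ante : list lform;
  succ : list lform }.

Definition seq_equiv (s t : sequent) : Prop :=
  Permutation (rels s) (rels t) /\ Permutation (ante s) (ante t) /\
  Permutation (succ s) (succ t).

Inductive rule_inst (s : sequent) : list sequent -> Prop :=
| ri_impL : forall x A B G p1 p2,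
    Permutation (ante s) ((x, Imp A B) :: G) ->
    seq_equiv p1 (mkSeq (rels s) G ((x, A) :: succ s)) ->
    seq_equiv p2 (mkSeq (rels s) ((x, B) :: G) (succ s)) ->
    rule_inst s [p1; p2]
| ri_impR : forall x A B O p,
    Permutation (succ s) ((x, Imp A B) :: O) ->
    seq_equiv p (mkSeq (rels s) ((x, A) :: ante s) ((x, B) :: O)) ->
    rule_inst s [p]
| ri_boxL : forall x y A p,
    In (Rel kR x y) (rels s) -> In (x, Box A) (ante s) ->
    seq_equiv p (mkSeq (rels s) ((y, A) :: ante s) (succ s)) ->
    rule_inst s [p]
| ri_triL : forall x y A p,
    In (Rel kS x y) (rels s) -> In (x, Tri A) (ante s) ->
    seq_equiv p (mkSeq (rels s) ((y, A) :: ante s) (succ s)) ->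
    rule_inst s [p]
| ri_trans : forall k1 k2 x y z p,
    In (Rel k1 x y) (rels s) -> In (Rel k2 y z) (rels s) ->
    seq_equiv p (mkSeq (Rel k2 x z :: rels s) (ante s) (succ s)) ->
    rule_inst s [p].

Definition lf_saturated (s : sequent) (lf : lform) : Prop :=
  let (x, A) := lf in
  match A with
  | Bot => True
  | Var _ => True
  | Imp A1 A2 =>
      (In (x, A) (ante s) -> In (x, A1) (succ s) \/ In (x, A2) (ante s)) /\
      (In (x, A) (succ s) -> In (x, A1) (ante s) /\ In (x, A2) (succ s))
  | Box A1 =>
      In (x, A) (ante s) -> forall y, In (Rel kR x y) (rels s) -> In (y, A1) (ante s)
  | Tri A1 =>
      In (x, A) (ante s) -> forall y, In (Rel kS x y) (rels s) -> In (y, A1) (ante s)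
  end.

Definition trans_closed (r : list ratom) : Prop :=
  forall k1 k2 x y z, In (Rel k1 x y) r -> In (Rel k2 y z) r -> In (Rel k2 x z) r.

Definition saturated (s : sequent) : Prop :=
  (forall lf, In lf (ante s) \/ In lf (succ s) -> lf_saturated s lf) /\
  trans_closed (rels s).

Inductive sat_app (s : sequent) : list sequent -> Prop :=
| sa_impL : forall x A B G p1 p2,
    Permutation (ante s) ((x, Imp A B) :: G) ->
    ~ In (x, A) (succ s) -> ~ In (x, B) (ante s) ->
    seq_equiv p1 (mkSeq (rels s) G ((x, A) :: succ s)) ->
    seq_equiv p2 (mkSeq (rels s) ((x, B) :: G) (succ s)) ->
    sat_app s [p1; p2]
| sa_impR : forall x A B O p,
    Permutation (succ s) ((x, Imp A B) :: O) ->
    ~ (In (x, A) (ante s) /\ In (x, B) (succ s)) ->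
    seq_equiv p (mkSeq (rels s) ((x, A) :: ante s) ((x, B) :: O)) ->
    sat_app s [p]
| sa_boxL : forall x y A p,
    In (Rel kR x y) (rels s) -> In (x, Box A) (ante s) ->
    ~ In (y, A) (ante s) ->
    seq_equiv p (mkSeq (rels s) ((y, A) :: ante s) (succ s)) ->
    sat_app s [p]
| sa_triL : forall x y A p,
    In (Rel kS x y) (rels s) -> In (x, Tri A) (ante s) ->
    ~ In (y, A) (ante s) ->
    seq_equiv p (mkSeq (rels s) ((y, A) :: ante s) (succ s)) ->
    sat_app s [p]
| sa_trans : forall k1 k2 x y z p,
    In (Rel k1 x y) (rels s) -> In (Rel k2 y z) (rels s) ->
    ~ In (Rel k2 x z) (rels s) ->
    seq_equiv p (mkSeq (Rel k2 x z :: rels s) (ante s) (succ s)) ->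
    sat_app s [p].

(* Leaf s : an open leaf; Node s ch : s is the conclusion of a rule
   instance whose premisses are the roots of ch (all rules used here
   have at least one premiss, so there are no closed leaves). *)
Inductive deriv : Type :=
| Leaf : sequent -> deriv
| Node : sequent -> list deriv -> deriv.

Definition root (t : deriv) : sequent :=
  match t with Leaf s => s | Node s _ => s end.

Fixpoint open_leaves (t : deriv) : list sequent :=
  match t with
  | Leaf s => [s]
  | Node _ ch =>
      (fix go (l : list deriv) : list sequent :=
         match l with [] => [] | d :: l' => open_leaves d ++ go l' end) ch
  end.

Fixpoint is_deriv (t : deriv) : Prop :=
  match t with
  | Leaf _ => True
  | Node s ch =>
      rule_inst s (map root ch) /\
      (fix go (l : list deriv) : Prop :=
         match l with [] => True | d :: l' => is_deriv d /\ go l' end) ch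
  end.

Inductive expand : deriv -> deriv -> Prop :=
| ex_leaf : forall s ps, sat_app s ps -> expand (Leaf s) (Node s (map Leaf ps))
| ex_node : forall s l1 d d' l2, expand d d' ->
    expand (Node s (l1 ++ d :: l2)) (Node s (l1 ++ d' :: l2)).

From Stdlib Require Import List Permutation Relations.
From Stdlib Require Import Arith Lia.
Import ListNotations.

(* Every item a saturation step adds to a leaf (a labelled formula on either
   side, or a relational atom) is built from the finitely many labels and
   subformulas of the root S, and the only item a step may delete is the
   principal implication, which is strictly bigger than a formula it adds.
   Weighting x:A by n + 1 - |A|, where n bounds the sizes of the subformulas
   of S, the total weight of the items of this finite universe that are
   absent from a sequent drops strictly from a leaf to each of its premisses.
   Termination follows because a tree is accessible as soon as its children
   are: replacing one element of a list of accessible elements by a smaller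
   one is well founded.  A final tree has no leaf admitting a saturation
   step, i.e. all its leaves are saturated. *)

Section AbsentWeight.

Variable A : Type.
Variable dec : forall x y : A, {x = y} + {x <> y}.
Variable w : A -> nat.

Fixpoint absent_weight (U l : list A) : nat :=
  match U with
  | [] => 0
  | a :: U' => (if in_dec dec a l then 0 else w a) + absent_weight U' l
  end.

Lemma absent_weight_antitone U l l' :
  (forall t, In t U -> In t l -> In t l') ->
  absent_weight U l' <= absent_weight U l.
Proof.
  induction U as [|a U IH]; intros Hll'; simpl; [lia|].
  specialize (IH (fun t Ht => Hll' t (or_intror Ht))).
  destruct (in_dec dec a l) as [Hl|Hl], (in_dec dec a l') as [Hl'|Hl']; try lia.
  exfalso; exact (Hl' (Hll' a (or_introl eq_refl) Hl)).
Qed.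

Lemma absent_weight_add U l l' t0 :
  (forall t, In t l -> In t l') -> In t0 U -> ~ In t0 l -> In t0 l' ->
  absent_weight U l' + w t0 <= absent_weight U l.
Proof.
  intros Hll' Ht0U Ht0l Ht0l'.
  induction U as [|a U IH]; simpl in *; [contradiction|].
  destruct (dec a t0) as [<-|Hne].
  - assert (Hmono := absent_weight_antitone U l l' (fun t _ => Hll' t)).
    destruct (in_dec dec a l); [contradiction|].
    destruct (in_dec dec a l'); [lia|contradiction].
  - destruct Ht0U as [Heq|Ht0U]; [congruence|].
    specialize (IH Ht0U).
    destruct (in_dec dec a l) as [Hl|Hl], (in_dec dec a l') as [Hl'|Hl']; try lia.
    exfalso; exact (Hl' (Hll' a Hl)).
Qed.

Lemma absent_weight_remove U l l' u :
  NoDup U -> (forall t, In t l -> In t l' \/ t = u) ->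
  absent_weight U l' <= absent_weight U l + w u.
Proof.
  intros HU Hll'.
  induction HU as [|a U HaU HU IH]; simpl; [lia|].
  destruct (dec a u) as [->|Hne].
  - assert (Hmono : absent_weight U l' <= absent_weight U l).
    { apply absent_weight_antitone; intros t HtU Htl.
      destruct (Hll' t Htl) as [| ->]; [assumption|contradiction]. }
    destruct (in_dec dec u l), (in_dec dec u l'); lia.
  - destruct (in_dec dec a l) as [Hl|Hl], (in_dec dec a l') as [Hl'|Hl']; try lia.
    destruct (Hll' a Hl); [contradiction|congruence].
Qed.

Lemma absent_weight_exchange U l l' t0 u :
  NoDup U -> In t0 U -> ~ In t0 l -> In t0 l' -> 0 < w t0 ->
  (forall t, In t l -> In t l' \/ (t = u /\ w u < w t0)) ->
  absent_weight U l' < absent_weight U l.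
Proof.
  intros HU Ht0U Ht0l Ht0l' Hw Hll'.
  destruct (le_lt_dec (w t0) (w u)) as [Hle|Hlt].
  - assert (Hadd : absent_weight U l' + w t0 <= absent_weight U l).
    { apply absent_weight_add; auto.
      intros t Ht; destruct (Hll' t Ht) as [|[_ ?]]; [assumption|lia]. }
    lia.
  - assert (Hadd : absent_weight U l' + w t0 <= absent_weight U (remove dec u l)).
    { apply absent_weight_add; auto.
      - intros t Ht; apply in_remove in Ht as [Ht Hne].
        destruct (Hll' t Ht) as [|[]]; [assumption|contradiction].
      - intros Ht; exact (Ht0l (proj1 (in_remove _ _ _ _ Ht))). }
    assert (Hrem : absent_weight U (remove dec u l) <= absent_weight U l + w u).
    { apply absent_weight_remove; auto.
      intros t Ht; destruct (dec t u) as [|Hne]; [now right|left].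
      now apply in_in_remove. }
    lia.
Qed.

End AbsentWeight.

Section ReplaceOne.

Variable A : Type.
Variable R : A -> A -> Prop.

Definition replace_one (l' l : list A) : Prop :=
  exists l1 d d' l2, l = l1 ++ d :: l2 /\ l' = l1 ++ d' :: l2 /\ R d' d.

Lemma Acc_replace_one l : Forall (Acc R) l -> Acc replace_one l.
Proof.
  induction 1 as [|d l Hd _ IH].
  - constructor; intros l' (l1 & d & d' & l2 & Hnil & _).
    destruct l1; discriminate.
  - revert l IH; induction Hd as [d _ IHd]; intros l Hl.
    induction Hl as [l Hl IHl].
    constructor; intros l' (l1 & e & e' & l2 & Heq & -> & Hee').
    destruct l1 as [|x l1]; simpl in Heq |- *; injection Heq as <- Heq.
    + subst l2; exact (IHd e' Hee' l (Acc_intro l Hl)).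
    + apply IHl; now exists l1, e, e', l2.
Qed.

End ReplaceOne.

Fixpoint deriv_ind_nested (P : deriv -> Prop) (HLeaf : forall s, P (Leaf s))
  (HNode : forall s ch, Forall P ch -> P (Node s ch)) (t : deriv) : P t :=
  match t with
  | Leaf s => HLeaf s
  | Node s ch =>
      HNode s ch
        ((fix go (l : list deriv) : Forall P l :=
            match l with
            | [] => Forall_nil P
            | d :: l' => Forall_cons d (deriv_ind_nested P HLeaf HNode d) (go l')
            end) ch)
  end.

Lemma open_leaves_Node s ch : open_leaves (Node s ch) = flat_map open_leaves ch.
Proof. induction ch as [|d ch IH]; simpl in *; congruence. Qed.

Lemma is_deriv_Node s ch :
  is_deriv (Node s ch) <-> rule_inst s (map root ch) /\ Forall is_deriv ch.
Proof.
  simpl; apply and_iff_compat_l.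
  induction ch as [|d ch IH]; simpl.
  - split; auto.
  - now rewrite IH, Forall_cons_iff.
Qed.

Lemma sat_app_rule_inst s ps : sat_app s ps -> rule_inst s ps.
Proof.
  destruct 1 as [x A B G p1 p2 Hperm _ _ E1 E2 | x A B O p Hperm _ E
                | x y A p Hr Hb _ E | x y A p Hr Hb _ E | k1 k2 x y z p Hxy Hyz _ E].
  - exact (ri_impL s x A B G p1 p2 Hperm E1 E2).
  - exact (ri_impR s x A B O p Hperm E).
  - exact (ri_boxL s x y A p Hr Hb E).
  - exact (ri_triL s x y A p Hr Hb E).
  - exact (ri_trans s k1 k2 x y z p Hxy Hyz E).
Qed.

Lemma expand_root t t' : expand t t' -> root t' = root t.
Proof. now destruct 1. Qed.

Lemma expand_is_deriv t t' : expand t t' -> is_deriv t -> is_deriv t'.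
Proof.
  induction 1 as [s ps Hsa | s l1 d d' l2 Hdd' IH].
  - intros _; apply is_deriv_Node; split.
    + rewrite map_map, map_id; now apply sat_app_rule_inst.
    + apply Forall_forall; intros d Hd.
      now apply in_map_iff in Hd as (p & <- & _).
  - rewrite !is_deriv_Node, !map_app, !Forall_app, !Forall_cons_iff; simpl.
    rewrite (expand_root _ _ Hdd').
    intros (Hrule & Hl1 & Hd & Hl2); auto.
Qed.

Lemma expand_star_root_is_deriv t t' :
  clos_refl_trans deriv expand t t' -> root t' = root t /\ (is_deriv t -> is_deriv t').
Proof.
  induction 1 as [t t' Hex | t | t t' t'' _ [Hroot1 Hderiv1] _ [Hroot2 Hderiv2]].
  - split; [apply expand_root | apply expand_is_deriv]; assumption.
  - auto.
  - split; [congruence | auto].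
Qed.

Lemma expand_at_open_leaf t s ps :
  In s (open_leaves t) -> sat_app s ps -> exists t', expand t t'.
Proof.
  revert s ps; induction t as [s0 | s0 ch IH] using deriv_ind_nested;
    intros s ps Hs Hsa.
  - destruct Hs as [<- | []]; eexists; exact (ex_leaf _ _ Hsa).
  - rewrite open_leaves_Node, in_flat_map in Hs; destruct Hs as (d & Hd & Hs).
    rewrite Forall_forall in IH; destruct (IH d Hd s ps Hs Hsa) as [d' Hdd'].
    apply in_split in Hd as (l1 & l2 & ->).
    eexists; exact (ex_node s0 l1 d d' l2 Hdd').
Qed.

Lemma Acc_expand_Node s ch :
  Acc (replace_one _ (transp _ expand)) ch -> Acc (transp _ expand) (Node s ch).
Proof.
  intros Hch; revert s; induction Hch as [ch _ IH]; intros s.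
  constructor; intros t Hex; unfold transp in Hex.
  inversion Hex; subst.
  apply IH; now exists l1, d, d', l2.
Qed.

Definition form_dec : forall A B : form, {A = B} + {A <> B}.
Proof. decide equality; apply Nat.eq_dec. Defined.

Definition lform_dec : forall a b : lform, {a = b} + {a <> b}.
Proof. decide equality; [apply form_dec | apply Nat.eq_dec]. Defined.

Definition ratom_dec : forall a b : ratom, {a = b} + {a <> b}.
Proof. decide equality; try apply Nat.eq_dec; decide equality. Defined.

Lemma seq_equiv_refl s : seq_equiv s s.
Proof. repeat split; apply Permutation_refl. Qed.

Lemma In_Permutation_cons {A} (a : A) l : In a l -> exists l', Permutation l (a :: l').
Proof.
  intros Ha; apply in_split in Ha as (l1 & l2 & ->).
  exists (l1 ++ l2); symmetry; apply Permutation_middle.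
Qed.

Lemma saturated_of_no_sat_app s : (forall ps, ~ sat_app s ps) -> saturated s.
Proof.
  intros Hnone; split.
  - intros [x A] _; destruct A as [| |A1 A2|A1|A1]; simpl; auto.
    + split; intros Himp.
      * destruct (in_dec lform_dec (x, A1) (succ s)) as [|HA1]; [now left|].
        destruct (in_dec lform_dec (x, A2) (ante s)) as [|HA2]; [now right|].
        destruct (In_Permutation_cons _ _ Himp) as [G HG].
        exfalso; eapply Hnone, (sa_impL s x A1 A2 G); eauto using seq_equiv_refl.
      * destruct (In_Permutation_cons _ _ Himp) as [O HO].
        destruct (in_dec lform_dec (x, A1) (ante s)),
          (in_dec lform_dec (x, A2) (succ s)); [now split| ..];
          exfalso; eapply Hnone, (sa_impR s x A1 A2 O); eauto using seq_equiv_refl; tauto.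
    + intros Hbox y Hr.
      destruct (in_dec lform_dec (y, A1) (ante s)) as [|HA]; [assumption|].
      exfalso; eapply Hnone, (sa_boxL s x y A1); eauto using seq_equiv_refl.
    + intros Htri y Hr.
      destruct (in_dec lform_dec (y, A1) (ante s)) as [|HA]; [assumption|].
      exfalso; eapply Hnone, (sa_triL s x y A1); eauto using seq_equiv_refl.
  - intros k1 k2 x y z Hxy Hyz.
    destruct (in_dec ratom_dec (Rel k2 x z) (rels s)) as [|Hxz]; [assumption|].
    exfalso; eapply Hnone, (sa_trans s k1 k2 x y z); eauto using seq_equiv_refl.
Qed.

Fixpoint fsize (A : form) : nat :=
  match A with
  | Bot | Var _ => 1
  | Imp A B => S (fsize A + fsize B)
  | Box A | Tri A => S (fsize A)
  end.

Fixpoint subformulas (A : form) : list form :=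
  match A with
  | Bot | Var _ => [A]
  | Imp B C => A :: subformulas B ++ subformulas C
  | Box B | Tri B => A :: subformulas B
  end.

Lemma subformulas_refl A : In A (subformulas A).
Proof. destruct A; simpl; auto. Qed.

Lemma subformulas_trans A B C :
  In B (subformulas A) -> In C (subformulas B) -> In C (subformulas A).
Proof.
  induction A as [| |A1 IH1 A2 IH2|A1 IH|A1 IH]; simpl; intros HB HC;
    try (destruct HB as [<-|HB]; [exact HC|]); try contradiction.
  - apply in_app_iff in HB as [HB|HB]; right; apply in_app_iff; eauto.
  - eauto.
  - eauto.
Qed.

Inductive item : Type :=
| IRel : ratom -> item
| IAnte : lform -> item
| ISucc : lform -> item.

Definition item_dec : forall i j : item, {i = j} + {i <> j}.
Proof. decide equality; auto using lform_dec, ratom_dec. Defined.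

Definition items (s : sequent) : list item :=
  map IRel (rels s) ++ map IAnte (ante s) ++ map ISucc (succ s).

Definition occurs (s : sequent) (i : item) : Prop :=
  match i with
  | IRel a => In a (rels s)
  | IAnte lf => In lf (ante s)
  | ISucc lf => In lf (succ s)
  end.

Lemma In_items s i : In i (items s) <-> occurs s i.
Proof.
  unfold items; rewrite !in_app_iff, !in_map_iff.
  destruct i as [a|lf|lf]; simpl; split.
  all: try (intros [(b & [=] & Hb) | [(b & [=] & Hb) | (b & [=] & Hb)]]; subst; exact Hb).
  all: intros H; eauto 6.
Qed.

Lemma occurs_equiv p q i : seq_equiv p q -> occurs p i <-> occurs q i.
Proof.
  intros (Hr & Ha & Hs); destruct i; simpl; split; apply Permutation_in;
    assumption || (symmetry; assumption).
Qed.

Definition isize (i : item) : nat :=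
  match i with
  | IRel _ => 0
  | IAnte (_, A) | ISucc (_, A) => fsize A
  end.

Definition grows (s p : sequent) : Prop :=
  exists t0 u, occurs p t0 /\ ~ occurs s t0 /\
    forall i, occurs s i -> occurs p i \/ (i = u /\ isize t0 < isize u).

Lemma grows_equiv s p q : seq_equiv p q -> grows s q -> grows s p.
Proof.
  intros Hpq (t0 & u & Ht0 & Hnew & Hkeep); exists t0, u; repeat split.
  - now apply (occurs_equiv _ _ _ Hpq).
  - exact Hnew.
  - intros i Hi; rewrite (occurs_equiv _ _ i Hpq); auto.
Qed.

Lemma grows_add_ante s lf :
  ~ In lf (ante s) -> grows s (mkSeq (rels s) (lf :: ante s) (succ s)).
Proof.
  intros Hnew; exists (IAnte lf), (IAnte lf); simpl; repeat split; auto.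
  intros [a|lf'|lf'] Hi; left; simpl; auto.
Qed.

Lemma grows_add_rel s a :
  ~ In a (rels s) -> grows s (mkSeq (a :: rels s) (ante s) (succ s)).
Proof.
  intros Hnew; exists (IRel a), (IRel a); simpl; repeat split; auto.
  intros [a'|lf|lf] Hi; left; simpl; auto.
Qed.

Lemma grows_of_exchange s p t0 u :
  occurs p t0 -> ~ occurs s t0 -> isize t0 < isize u ->
  (forall i, occurs s i -> occurs p i \/ i = u) -> grows s p.
Proof.
  intros Ht0 Hnew Hlt Hkeep; exists t0, u; repeat split; auto.
  intros i Hi; destruct (Hkeep i Hi) as [| ->]; auto.
Qed.

Lemma sat_app_grows s ps p : sat_app s ps -> In p ps -> grows s p.
Proof.
  destruct 1 as [x A B G p1 p2 Hperm HnA HnB E1 E2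
                | x A B O p0 Hperm Hn E
                | x y A p0 _ _ Hn E
                | x y A p0 _ _ Hn E
                | k1 k2 x y z p0 _ _ Hn E];
    intros Hp.
  - destruct Hp as [<-|[<-|[]]];
      [eapply grows_equiv; [exact E1|] | eapply grows_equiv; [exact E2|]].
    + apply grows_of_exchange with (ISucc (x, A)) (IAnte (x, Imp A B)); simpl; auto; [lia|].
      intros [a|lf|lf] Hi; simpl; auto.
      apply (Permutation_in _ Hperm) in Hi as [<-|Hi]; auto.
    + apply grows_of_exchange with (IAnte (x, B)) (IAnte (x, Imp A B)); simpl; auto; [lia|].
      intros [a|lf|lf] Hi; simpl; auto.
      apply (Permutation_in _ Hperm) in Hi as [<-|Hi]; auto.
  - destruct Hp as [<-|[]]; eapply grows_equiv; [exact E|].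
    assert (Hkeep : forall i, occurs s i ->
              occurs (mkSeq (rels s) ((x, A) :: ante s) ((x, B) :: O)) i \/
              i = ISucc (x, Imp A B)).
    { intros [a|lf|lf] Hi; simpl; auto.
      apply (Permutation_in _ Hperm) in Hi as [<-|Hi]; auto. }
    destruct (in_dec lform_dec (x, A) (ante s)) as [HA|HA].
    + apply grows_of_exchange with (ISucc (x, B)) (ISucc (x, Imp A B)); simpl; auto; lia.
    + apply grows_of_exchange with (IAnte (x, A)) (ISucc (x, Imp A B)); simpl; auto; lia.
  - destruct Hp as [<-|[]]; eapply grows_equiv; [exact E | now apply grows_add_ante].
  - destruct Hp as [<-|[]]; eapply grows_equiv; [exact E | now apply grows_add_ante].
  - destruct Hp as [<-|[]]; eapply grows_equiv; [exact E | now apply grows_add_rel].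
Qed.

Lemma in_subformulas_Imp_l A B : In A (subformulas (Imp A B)).
Proof. simpl; right; apply in_or_app; left; apply subformulas_refl. Qed.

Lemma in_subformulas_Imp_r A B : In B (subformulas (Imp A B)).
Proof. simpl; right; apply in_or_app; right; apply subformulas_refl. Qed.

Lemma in_subformulas_Box A : In A (subformulas (Box A)).
Proof. simpl; right; apply subformulas_refl. Qed.

Lemma in_subformulas_Tri A : In A (subformulas (Tri A)).
Proof. simpl; right; apply subformulas_refl. Qed.

Section Universe.

Variable L : list label.
Variable F : list form.
Hypothesis F_subformula_closed : forall A B, In A F -> In B (subformulas A) -> In B F.

Definition lform_in_closure (lf : lform) : Prop := In (fst lf) L /\ In (snd lf) F.

Definition in_closure (i : item) : Prop :=
  match i with
  | IRel (Rel _ x y) => In x L /\ In y L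
  | IAnte lf | ISucc lf => lform_in_closure lf
  end.

Definition closed (s : sequent) : Prop := forall i, occurs s i -> in_closure i.

Lemma closed_equiv p q : seq_equiv p q -> closed q -> closed p.
Proof. intros Hpq Hq i Hi; apply Hq, (occurs_equiv _ _ _ Hpq), Hi. Qed.

Lemma closed_of_extension s p :
  closed s -> (forall i, occurs p i -> occurs s i \/ in_closure i) -> closed p.
Proof. intros Hs Hext i Hi; destruct (Hext i Hi); auto. Qed.

Lemma closed_add_ante s lf :
  closed s -> lform_in_closure lf -> closed (mkSeq (rels s) (lf :: ante s) (succ s)).
Proof.
  intros Hs Hlf; apply (closed_of_extension s); auto.
  intros [a|lf'|lf'] Hi; simpl in Hi |- *; auto.
  destruct Hi as [<-|Hi]; auto.
Qed.

Lemma closed_add_rel s a :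
  closed s -> in_closure (IRel a) -> closed (mkSeq (a :: rels s) (ante s) (succ s)).
Proof.
  intros Hs Ha; apply (closed_of_extension s); auto.
  intros [a'|lf|lf] Hi; simpl in Hi |- *; auto.
  destruct Hi as [<-|Hi]; auto.
Qed.

Lemma lform_in_closure_sub x C D :
  lform_in_closure (x, C) -> In D (subformulas C) -> lform_in_closure (x, D).
Proof. intros [Hx HC] HD; split; [exact Hx | exact (F_subformula_closed C D HC HD)]. Qed.

Lemma sat_app_closed s ps p : closed s -> sat_app s ps -> In p ps -> closed p.
Proof.
  intros Hs Hsa Hp.
  destruct Hsa as [x A B G p1 p2 Hperm _ _ E1 E2
                  | x A B O p0 Hperm _ E
                  | x y A p0 Hr Hb _ E
                  | x y A p0 Hr Hb _ E
                  | k1 k2 x y z p0 Hr1 Hr2 _ E].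
  - assert (Himp : lform_in_closure (x, Imp A B))
      by exact (Hs (IAnte _) (Permutation_in _ (Permutation_sym Hperm) (in_eq _ _))).
    assert (HG : forall lf, In lf G -> In lf (ante s))
      by (intros lf Hlf; exact (Permutation_in _ (Permutation_sym Hperm) (in_cons _ _ _ Hlf))).
    destruct Hp as [<-|[<-|[]]];
      [eapply closed_equiv; [exact E1|] | eapply closed_equiv; [exact E2|]];
      apply (closed_of_extension s); auto; intros [a|lf|lf] Hi; simpl in Hi |- *; auto;
      destruct Hi as [<-|Hi]; auto; right.
    + exact (lform_in_closure_sub _ _ _ Himp (in_subformulas_Imp_l A B)).
    + exact (lform_in_closure_sub _ _ _ Himp (in_subformulas_Imp_r A B)).
  - destruct Hp as [<-|[]]; eapply closed_equiv; [exact E|].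
    assert (Himp : lform_in_closure (x, Imp A B))
      by exact (Hs (ISucc _) (Permutation_in _ (Permutation_sym Hperm) (in_eq _ _))).
    apply (closed_of_extension s); auto; intros [a|lf|lf] Hi; simpl in Hi |- *; auto;
      destruct Hi as [<-|Hi]; auto.
    + right; exact (lform_in_closure_sub _ _ _ Himp (in_subformulas_Imp_l A B)).
    + right; exact (lform_in_closure_sub _ _ _ Himp (in_subformulas_Imp_r A B)).
    + left; exact (Permutation_in _ (Permutation_sym Hperm) (in_cons _ _ _ Hi)).
  - destruct Hp as [<-|[]]; eapply closed_equiv; [exact E|].
    apply closed_add_ante; [exact Hs|].
    destruct (Hs (IRel _) Hr) as [_ Hy], (Hs (IAnte _) Hb) as [_ HBox].
    split; [exact Hy | exact (F_subformula_closed _ _ HBox (in_subformulas_Box A))].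
  - destruct Hp as [<-|[]]; eapply closed_equiv; [exact E|].
    apply closed_add_ante; [exact Hs|].
    destruct (Hs (IRel _) Hr) as [_ Hy], (Hs (IAnte _) Hb) as [_ HTri].
    split; [exact Hy | exact (F_subformula_closed _ _ HTri (in_subformulas_Tri A))].
  - destruct Hp as [<-|[]]; eapply closed_equiv; [exact E|].
    apply closed_add_rel; [exact Hs|].
    destruct (Hs (IRel _) Hr1) as [Hx _], (Hs (IRel _) Hr2) as [_ Hz].
    split; assumption.
Qed.

Variable n : nat.
Hypothesis F_size_bound : forall A, In A F -> fsize A <= n.

Definition weight (i : item) : nat := S (n - isize i).

Definition universe : list item :=
  nodup item_dec
    (flat_map (fun k => map (fun xy => IRel (Rel k (fst xy) (snd xy))) (list_prod L L)) [kR; kS]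
     ++ map IAnte (list_prod L F) ++ map ISucc (list_prod L F)).

Lemma in_universe i : in_closure i -> In i universe.
Proof.
  intros Hi; unfold universe; apply nodup_In; rewrite !in_app_iff.
  destruct i as [[k x y]|[x A]|[x A]]; destruct Hi as [Hx Hy].
  - left; apply in_flat_map; exists k; split; [destruct k; simpl; auto|].
    apply (in_map (fun xy => IRel (Rel k (fst xy) (snd xy))) _ (x, y)), in_prod; assumption.
  - right; left; apply in_map, in_prod; assumption.
  - right; right; apply in_map, in_prod; assumption.
Qed.

Lemma isize_le_bound i : in_closure i -> isize i <= n.
Proof. destruct i as [[]|[x A]|[x A]]; simpl; intros [_ HA]; auto; lia. Qed.

Definition measure (s : sequent) : nat :=
  absent_weight _ item_dec weight universe (items s).

Lemma measure_lt s p : closed s -> closed p -> grows s p -> measure p < measure s.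
Proof.
  intros Hs Hp (t0 & u & Ht0 & Hnew & Hkeep).
  apply absent_weight_exchange with t0 u.
  - apply NoDup_nodup.
  - apply in_universe, Hp, Ht0.
  - now rewrite In_items.
  - now rewrite In_items.
  - unfold weight; lia.
  - intros i Hi; rewrite In_items in Hi |- *.
    destruct (Hkeep i Hi) as [| [-> Hlt]]; [now left|right; split; [reflexivity|]].
    assert (Hu := isize_le_bound u (Hs u Hi)); unfold weight; lia.
Qed.

Lemma Acc_Leaf_of_closed s : closed s -> Acc (transp _ expand) (Leaf s).
Proof.
  induction s as [s IH] using (well_founded_induction (well_founded_ltof _ measure)).
  intros Hs; constructor; intros t Hex; unfold transp in Hex.
  inversion Hex as [s' ps Hsa|]; subst.
  apply Acc_expand_Node, Acc_replace_one, Forall_forall; intros d Hd.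
  apply in_map_iff in Hd as (p & <- & Hp).
  assert (Hpc : closed p) by exact (sat_app_closed s ps p Hs Hsa Hp).
  apply IH; [apply measure_lt; eauto using sat_app_grows | exact Hpc].
Qed.

End Universe.

Definition ratom_labels (a : ratom) : list label := let 'Rel _ x y := a in [x; y].

Definition labels (s : sequent) : list label :=
  flat_map ratom_labels (rels s) ++ map fst (ante s ++ succ s).

Definition formulas (s : sequent) : list form :=
  flat_map (fun lf => subformulas (snd lf)) (ante s ++ succ s).

Lemma formulas_subformula_closed s A B :
  In A (formulas s) -> In B (subformulas A) -> In B (formulas s).
Proof.
  unfold formulas; rewrite !in_flat_map; intros (lf & Hlf & HA) HB.
  exists lf; split; [exact Hlf | exact (subformulas_trans _ _ _ HA HB)].
Qed.

Lemma formulas_size_bound s A :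
  In A (formulas s) -> fsize A <= list_max (map fsize (formulas s)).
Proof.
  intros HA.
  assert (Hmax := proj1 (list_max_le (map fsize (formulas s)) _) (le_n _)).
  rewrite Forall_forall in Hmax; apply Hmax, in_map, HA.
Qed.

Lemma closed_root s : closed (labels s) (formulas s) s.
Proof.
  assert (Hlf : forall lf, In lf (ante s ++ succ s) ->
            lform_in_closure (labels s) (formulas s) lf).
  { intros [x A] Hlf; split.
    - unfold labels; apply in_or_app; right; now apply (in_map fst) in Hlf.
    - unfold formulas; apply in_flat_map; exists (x, A); split; [exact Hlf|].
      apply subformulas_refl. }
  intros [[k x y]|lf|lf] Hi; simpl in Hi.
  - split; unfold labels; apply in_or_app; left; apply in_flat_map;
      exists (Rel k x y); simpl; auto.
  - apply Hlf, in_or_app; now left.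
  - apply Hlf, in_or_app; now right.
Qed.

Theorem lemma2 (S : sequent) :
  Acc (fun t' t => expand t t') (Leaf S) /\
  (forall t, clos_refl_trans deriv expand (Leaf S) t ->
     (forall t', ~ expand t t') ->
     root t = S /\ is_deriv t /\
     (forall s, In s (open_leaves t) -> saturated s)).
Proof.
  split.
  - apply (Acc_Leaf_of_closed (labels S) (formulas S) (formulas_subformula_closed S)
             _ (formulas_size_bound S) S (closed_root S)).
  - intros t Hreach Hfinal.
    destruct (expand_star_root_is_deriv _ _ Hreach) as [Hroot Hderiv].
    split; [exact Hroot|]; split; [exact (Hderiv I)|].
    intros s Hs; apply saturated_of_no_sat_app; intros ps Hsa.
    destruct (expand_at_open_leaf t s ps Hs Hsa) as [t' Ht'].
    exact (Hfinal t' Ht').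
Qed.
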